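(* Let $\hat G$ be a $C_2$-graded finite group acting on $\mathbb C[[u,v]]$ by degree-preserving generalized algebra automorphisms preserving $uv$. The matrix factorization $\{u,v\}\in\mathrm{MF}(\mathbb C[[u,v]],uv)$ admits a Real $G$-equivariant structure (i.e. can be lifted to an object of $\mathrm{MF}_{\hat G}(\mathbb C[[u,v]],uv)$) if and only if there exists $\chi\in Z^1(\hat G;\mathbb C^\times_\pi)$ with $\sigma(u)=\chi(\sigma)u$ and $\sigma(v)=\chi(\sigma)^{-1}v$ for all $\sigma\in\hat G$. In that case the set of dg isomorphism classes of Real $G$-equivariant structures on $\{u,v\}$ is in bijection with $H^1(\hat G;\mathbb C[[u,v]]^\times_\pi)$.
   Context: $C_2=\{\pm1\}$; $\pi:\hat G\to C_2$, $G=\ker\pi$. $\mathbb C^\times_\pi$ is $\mathbb C^\times$ with $\hat G$ acting through $\pi$ by complex conjugation; $\mathbb C[[u,v]]^\times_\pi$ is the group of units with $\hat G$ acting through its given action on $\mathbb C[[u,v]]$; $Z^1$, $H^1$ are (normalized) group cocycles and cohomology. A generalized algebra automorphism is a ring automorphism which is $\mathbb C$-linear or $\mathbb C$-antilinear; $\sigma\in\hat G$ is linear iff $\pi(\sigma)=1$. $\mathrm{MF}(S,w)$: objects $(M,d_M)$, $M$ finite rank free $\mathbb Z/2$-graded $S$-module, $d_M$ odd with $d_M^2=w\,\mathrm{id}$; Hom complexes $\mathrm{Hom}_S(M,N)$ with $D(f)=d_Nf-(-1)^{|f|}fd_M$. $\{u,v\}$ is $S\oplus S$ with $d^0=u:M_0\to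 M_1$, $d^1=v:M_1\to M_0$. $M^\sigma$ is $M$ with $r\cdot m=\sigma^{-1}(r)m$. The functors $\rho(\sigma)(M,d_M)=(M^\sigma,d_M^\sigma)$ with identity coherence maps give a Real 2-representation of $G$; a Real $G$-equivariant structure on $M$ is a family of closed degree-0 isomorphisms $u_\sigma:M\to M^\sigma$ with $u_{\sigma_2\sigma_1}=(u_{\sigma_1})^{\sigma_2}\circ u_{\sigma_2}$; $\mathrm{MF}_{\hat G}$ is the category of such pairs with morphisms $f$ satisfying $u'_\sigma f=f^\sigma u_\sigma$. *)

From HB Require Import structures.
From mathcomp Require Import all_boot all_algebra all_fingroup.
From mathcomp Require Import boolp.
From mathcomp Require Import complex.
From mathcomp Require Import Rstruct.
Set Implicit Arguments. Unset Strict Implicit. Unset Printing Implicit Defensive.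
Import GRing.Theory Num.Theory.
Local Open Scope ring_scope.

(* Formal power series in one variable over R, coefficient n = coefficient of X^n.
   We endow them with the Cauchy product, giving a commutative ring. *)
Record fps (R : Type) : Type := FPS { coef : nat -> R }.

Section FPSRing.
Variable R : comNzRingType.
Local Notation F := (fps R).
HB.instance Definition _ := gen_eqMixin F.
HB.instance Definition _ := gen_choiceMixin F.

Lemma fpsP (f g : F) : (forall n, coef f n = coef g n) -> f = g.
Proof. by case: f; case: g => g f /= H; congr FPS; apply: funext. Qed.

Definition fps0 : F := FPS (fun=> 0).
Definition fpsadd (f g : F) : F := FPS (fun n => coef f n + coef g n).
Definition fpsopp (f : F) : F := FPS (fun n => - coef f n).
Lemma fpsaddA : associative fpsadd.
Proof. by move=> f g h; apply: fpsP => n /=; rewrite addrA. Qed.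
Lemma fpsaddC : commutative fpsadd.
Proof. by move=> f g; apply: fpsP => n /=; rewrite addrC. Qed.
Lemma fpsadd0 : left_id fps0 fpsadd.
Proof. by move=> f; apply: fpsP => n /=; rewrite add0r. Qed.
Lemma fpsaddN : left_inverse fps0 fpsopp fpsadd.
Proof. by move=> f; apply: fpsP => n /=; rewrite addNr. Qed.
HB.instance Definition _ := GRing.isZmodule.Build F fpsaddA fpsaddC fpsadd0 fpsaddN.

Definition fpsmul (f g : F) : F :=
  FPS (fun n => \sum_(i < n.+1) \sum_(j < n.+1 | (i + j == n)%N) coef f i * coef g j).
Definition fps1 : F := FPS (fun n => (n == 0)%:R).

Lemma widen2 (X : nat -> nat -> R) m N : (m <= N)%N ->
  \sum_(a < m.+1) \sum_(b < m.+1 | (a + b == m)%N) X a b =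
  \sum_(a < N.+1) \sum_(b < N.+1 | (a + b == m)%N) X a b.
Proof.
move=> mN.
rewrite (big_ord_widen_cond N.+1 (fun _ => true)
  (fun a : nat => \sum_(b < m.+1 | (a + b == m)%N) X a b)) //.
rewrite [RHS](bigID (fun a : 'I_N.+1 => (a < m.+1)%N)) /=.
rewrite [X in _ = _ + X]big1 ?addr0; last first.
  move=> a am; rewrite big1 // => b /eqP abm.
  by move: am; rewrite -abm ltnS leq_addr.
apply: eq_bigr => a am.
rewrite (big_ord_widen_cond N.+1 (fun b : nat => a + b == m)%N (X a)) //.
by apply: eq_bigl => b; case: eqP => //= <-; rewrite ltnS leq_addl.
Qed.

Lemma exch2 (N M : nat) (P : 'I_N -> 'I_M -> bool) (X : 'I_N -> 'I_M -> R) :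
  \sum_(i < N) \sum_(j < M | P i j) X i j = \sum_(j < M) \sum_(i < N | P i j) X i j.
Proof.
rewrite (eq_bigr (fun i => \sum_(j < M) (if P i j then X i j else 0))); last first.
  by move=> i _; rewrite big_mkcond.
rewrite exchange_big /=; apply: eq_bigr => j _; by rewrite [RHS]big_mkcond.
Qed.

Lemma fpsmulC : commutative fpsmul.
Proof.
move=> f g; apply: fpsP => n /=; rewrite exch2 /=.
by apply: eq_bigr => i _; apply: eq_big => [j|j _]; [by rewrite addnC | by rewrite mulrC].
Qed.

Lemma fpsmul1 : left_id fps1 fpsmul.
Proof.
move=> f; apply: fpsP => n /=; rewrite big_ord_recl /=.
rewrite [X in _ + X = _]big1 ?addr0; last first.
  by move=> i _; rewrite big1 // => j _; rewrite mul0r.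
rewrite (bigD1 (ord_max : 'I_n.+1)) //= big1 ?addr0 ?mul1r // => j /andP[/eqP j0 jn].
by case/eqP: jn; apply: val_inj.
Qed.

Lemma fpsmulDl : left_distributive fpsmul fpsadd.
Proof.
move=> f g h; apply: fpsP => n /=; rewrite -big_split; apply: eq_bigr => i _.
by rewrite -big_split; apply: eq_bigr => j _; rewrite mulrDl.
Qed.


Lemma exch3 (N : nat) (P : 'I_N -> bool) (Q : 'I_N -> 'I_N -> 'I_N -> bool)
  (Z : 'I_N -> 'I_N -> R) :
  \sum_(k < N | P k) \sum_(j < N) \sum_(l < N | Q j l k) Z j l =
  \sum_(j < N) \sum_(l < N) \sum_(k < N | P k && Q j l k) Z j l.
Proof.
rewrite big_mkcond /=.
rewrite (eq_bigr (fun k => \sum_(j < N) \sum_(l < N) (if P k && Q j l k then Z j l else 0))); last first.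
  move=> k _; case: (P k) => /=; last by rewrite big1 // => j _; rewrite big1.
  by apply: eq_bigr => j _; rewrite big_mkcond.
rewrite exchange_big /=; apply: eq_bigr => j _.
rewrite exchange_big /=; apply: eq_bigr => l _.
by rewrite [RHS]big_mkcond.
Qed.

Lemma sum_unique (n i j l : nat) (Y : R) :
  \sum_(k < n.+1 | (i + k == n)%N && (j + l == k)%N) Y =
  if (i + j + l == n)%N then Y else 0.
Proof.
case: (boolP (i + j + l == n)%N) => [/eqP ijl | nijl].
  have jln : (j + l < n.+1)%N by rewrite -ijl ltnS -addnA leq_addl.
  rewrite (bigD1 (Ordinal jln)) /=; last by rewrite addnA ijl !eqxx.
  rewrite big1 ?addr0 // => k /andP[/andP[_ /eqP jlk] nk].
  by case/eqP: nk; apply: val_inj; rewrite /= jlk.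
rewrite big1 // => k /andP[/eqP ik /eqP jlk].
by case/negP: nijl; rewrite -addnA jlk ik.
Qed.

Lemma fpsmulA : associative fpsmul.
Proof.
move=> f g h; apply: fpsP => n /=.
pose T := \sum_(i < n.+1) \sum_(j < n.+1) \sum_(l < n.+1 | (i + j + l == n)%N)
                 coef f i * coef g j * coef h l.
transitivity T.
  apply: eq_bigr => i _.
  transitivity (\sum_(k < n.+1 | (i + k == n)%N) \sum_(j < n.+1) \sum_(l < n.+1 | (j + l == k)%N)
       coef f i * coef g j * coef h l).
    apply: eq_bigr => k /eqP ikn /=; rewrite (widen2 (fun a b => coef g a * coef h b) (N := n)); last by rewrite -ltnS ltn_ord.
    rewrite mulr_sumr; apply: eq_bigr => j _; rewrite mulr_sumr.
    by apply: eq_bigr => l _; rewrite mulrA.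
  rewrite exch3; apply: eq_bigr => j _; rewrite [RHS]big_mkcond; apply: eq_bigr => l _.
  by rewrite sum_unique.
symmetry.
rewrite exch2 /=.
transitivity (\sum_(l < n.+1) \sum_(k < n.+1 | (k + l == n)%N) \sum_(i < n.+1) \sum_(j < n.+1 | (i + j == k)%N)
       coef f i * coef g j * coef h l).
  apply: eq_bigr => l _; apply: eq_bigr => k /eqP kln.
  rewrite /= (widen2 (fun a b => coef f a * coef g b) (N := n)); last by rewrite -ltnS ltn_ord.
  rewrite mulr_suml; apply: eq_bigr => i _; by rewrite mulr_suml.
transitivity (\sum_(l < n.+1) \sum_(i < n.+1) \sum_(j < n.+1 | (i + j + l == n)%N)
       coef f i * coef g j * coef h l).
  apply: eq_bigr => l _.
  rewrite (exch3 (fun k : 'I_n.+1 => (k + l == n)%N) (fun i j k : 'I_n.+1 => (i + j == k)%N)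
     (fun i j => coef f i * coef g j * coef h l)).
  apply: eq_bigr => i _; rewrite [RHS]big_mkcond; apply: eq_bigr => j _.
  rewrite (eq_bigl (fun k : 'I_n.+1 => (l + k == n)%N && (i + j == k)%N)); last first.
    by move=> k; rewrite addnC.
  by rewrite sum_unique -addnA [(l + _)%N]addnC.
rewrite /T exchange_big /=; apply: eq_bigr => i _.
rewrite exch2 /=; apply: eq_bigr => j _.
by apply: eq_bigr.
Qed.

Lemma fps1_neq0 : fps1 != 0.
Proof. by apply/eqP => /(congr1 (fun p : fps R => coef p 0%N)) /= /eqP; rewrite oner_eq0. Qed.

HB.instance Definition _ := GRing.Zmodule_isComNzRing.Build F
  fpsmulA fpsmulC fpsmul1 fpsmulDl fps1_neq0.
End FPSRing.

Definition fpsC (R : comNzRingType) (c : R) : fps R := FPS (fun n => if n == 0%N then c else 0).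
Definition fpsX (R : comNzRingType) : fps R := FPS (fun n => (n == 1%N)%:R).

Definition C : numClosedFieldType := (Rdefinitions.R)[i].

(* S = C[[u,v]] realised as (C[[u]])[[v]] *)
Definition S : comNzRingType := fps (fps C).

(* coefficient of u^i v^j *)
Definition coef2 (f : S) (i j : nat) : C := coef (coef f j) i.

Definition uS : S := fpsC (fpsX C).
Definition vS : S := fpsX (fps C).
Definition sc (c : C) : S := fpsC (fpsC c).

Definition homogeneous (d : nat) (f : S) : Prop :=
  forall i j : nat, (i + j != d)%N -> coef2 f i j = 0.

Definition degree_preserving (s : S -> S) : Prop :=
  forall (d : nat) (f : S), homogeneous d f -> homogeneous d (s f).

(* complex conjugation if b (i.e. pi(sigma) = -1), identity otherwise *)
Definition pconj (b : bool) (z : C) : C := if b then z^* else z.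

Definition gen_alg_aut (b : bool) (s : S -> S) : Prop :=
  [/\ bijective s,
      forall f g, s (f + g) = s f + s g,
      forall f g, s (f * g) = s f * s g,
      s 1 = 1
    & forall (c : C) (f : S), s (sc c * f) = sc (pconj b c) * s f].

(* Action of the C_2-graded group (gT, pi) on C[[u,v]] by degree-preserving
   generalized algebra automorphisms preserving uv; pi x = true means pi(x) = -1. *)
Definition graded_action (gT : finGroupType) (pi : gT -> bool) (act : gT -> S -> S) : Prop :=
  [/\ forall f, act 1%g f = f,
      forall (x y : gT) f, act (x * y)%g f = act x (act y f),
      forall x, gen_alg_aut (pi x) (act x),
      forall x, degree_preserving (act x)
    & forall x, act x (uS * vS) = uS * vS].

Definition Z1_Cpi (gT : finGroupType) (pi : gT -> bool) (chi : gT -> C) : Prop :=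
  [/\ forall x, chi x != 0,
      chi 1%g = 1
    & forall x y : gT, chi (x * y)%g = chi x * pconj (pi x) (chi y)].

Definition unitS (a : S) : Prop := exists b : S, a * b = 1.

Definition Z1_S (gT : finGroupType) (act : gT -> S -> S) (c : gT -> S) : Prop :=
  [/\ forall x, unitS (c x),
      c 1%g = 1
    & forall x y : gT, c (x * y)%g = c x * act x (c y)].

Definition cohomologous (gT : finGroupType) (act : gT -> S -> S) (c c' : gT -> S) : Prop :=
  exists b : S, unitS b /\ forall x : gT, c' x * act x b = b * c x.

(* The matrix factorization {u,v}: M = M_0 (+) M_1 = S (+) S, d^0 = u, d^1 = v.
   A degree-0 map M -> N between such modules is a pair of maps (f0, f1) on the
   two components.  A map f : M -> M^s is S-linear iff f(m+m') = f m + f m' and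
   f (r m) = s^-1(r) f m; we write [semilinear t f] with t = s^-1. *)
Definition semilinear (t : S -> S) (f : S -> S) : Prop :=
  (forall m m' : S, f (m + m') = f m + f m') /\ (forall r m : S, f (r * m) = t r * f m).

(* closedness of a degree-0 map (f0,f1) for the differential of {u,v}
   (the twisted differential d^s has the same underlying map) *)
Definition closed_uv (f0 f1 : S -> S) : Prop :=
  (forall m, uS * f0 m = f1 (uS * m)) /\ (forall m, vS * f1 m = f0 (vS * m)).

(* Real G-equivariant structure on {u,v}: closed degree-0 isomorphisms
   U_x = (U0 x, U1 x) : M -> M^x with U_{x2 x1} = (U_{x1})^{x2} o U_{x2}. *)
Definition RealEqStr (gT : finGroupType) (act : gT -> S -> S) (U0 U1 : gT -> S -> S) : Prop :=
  [/\ forall x, semilinear (act x^-1%g) (U0 x) /\ semilinear (act x^-1%g) (U1 x),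
      forall x, bijective (U0 x) /\ bijective (U1 x),
      forall x, closed_uv (U0 x) (U1 x)
    & forall (x1 x2 : gT) (m : S),
        U0 (x2 * x1)%g m = U0 x1 (U0 x2 m) /\ U1 (x2 * x1)%g m = U1 x1 (U1 x2 m)].

(* isomorphism in MF_Ĝ between ({u,v},U) and ({u,v},U'): a closed degree-0
   S-linear isomorphism f with U'_x o f = f^x o U_x *)
Definition EqStr_iso (gT : finGroupType) (U0 U1 U0' U1' : gT -> S -> S) : Prop :=
  exists f0 f1 : S -> S,
    [/\ semilinear id f0 /\ semilinear id f1,
        bijective f0 /\ bijective f1,
        closed_uv f0 f1
      & forall (x : gT) (m : S), U0' x (f0 m) = f0 (U0 x m) /\ U1' x (f1 m) = f1 (U1 x m)].

From Pilot Require Import Defs.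
From HB Require Import structures.
From mathcomp Require Import all_boot all_algebra all_fingroup.
From mathcomp Require Import boolp complex Rstruct zify ring.
Import GRing.Theory Num.Theory.
Local Open Scope ring_scope.
Set Implicit Arguments.

(* A semilinear map of the free rank-one module S is determined by the image a
   of 1, and is bijective iff a is a unit.  So a Real structure on {u,v} is the
   same as two families of units a_x = U0_x(1), b_x = U1_x(1); closedness says
   u a_x = x^-1(u) b_x and v b_x = x^-1(v) a_x.  As x^-1 preserves degree,
   x^-1(u) and x^-1(v) are then constant multiples of u and v, and invariance
   of uv makes the two constants inverse to each other; the composition law of
   the action turns the constant of u into a cocycle chi.  Conversely, b can be
   any cocycle with values in S^x, and then a = chi b is forced.  Isomorphisms
   of Real structures are multiplications by a unit, which changes b by a
   coboundary. *)

Section FpsCoef.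
Variable R : comNzRingType.
Implicit Types f g : fps R.

Lemma coef_mul f g n :
  coef (f * g) n = \sum_(i < n.+1) coef f i * coef g (n - i).
Proof.
rewrite /=; apply: eq_bigr => i _.
have ni : (n - i < n.+1)%N by rewrite ltnS leq_subr.
rewrite (bigD1 (Ordinal ni)) /=; last by rewrite subnKC // -ltnS.
rewrite big1 ?addr0 // => j /andP[/eqP ij nj]; case/eqP: nj; apply: val_inj => /=.
by move: ij; clear; lia.
Qed.

Lemma coef_fpsCM (c : R) g n : coef (fpsC c * g) n = c * coef g n.
Proof. by rewrite coef_mul big_ord_recl subn0 big1 ?addr0 // => i _; rewrite mul0r. Qed.

Lemma coef_fpsXM0 g : coef (fpsX R * g) 0 = 0.
Proof. by rewrite coef_mul big_ord_recl big_ord0 /= mul0r addr0. Qed.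

Lemma coef_fpsXMS g n : coef (fpsX R * g) n.+1 = coef g n.
Proof.
rewrite coef_mul big_ord_recl /= mul0r add0r big_ord_recl /= mul1r subSS subn0.
by rewrite big1 ?addr0 // => i _; rewrite mul0r.
Qed.

End FpsCoef.

Section Coef2.
Implicit Types (f g : S) (c : C).

Lemma coef2P f g : (forall i j, coef2 f i j = coef2 g i j) -> f = g.
Proof. by move=> fg; apply: fpsP => j; apply: fpsP => i; apply: fg. Qed.

Lemma coef2_1 i j : coef2 1 i j = ((i == 0%N) && (j == 0%N))%:R.
Proof. by rewrite /coef2 /=; case: j => [|j]; rewrite ?andbT ?andbF. Qed.

Lemma coef2_uM g i j : coef2 (uS * g) i j = if i is k.+1 then coef2 g k j else 0.
Proof. by rewrite /coef2 coef_fpsCM; case: i => [|i]; rewrite ?coef_fpsXM0 ?coef_fpsXMS. Qed.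

Lemma coef2_vM g i j : coef2 (vS * g) i j = if j is k.+1 then coef2 g i k else 0.
Proof. by rewrite /coef2; case: j => [|j]; rewrite ?coef_fpsXM0 ?coef_fpsXMS. Qed.

Lemma coef2_scM c g i j : coef2 (sc c * g) i j = c * coef2 g i j.
Proof. by rewrite /coef2 !coef_fpsCM. Qed.

Lemma coef2_u i j : coef2 uS i j = ((i == 1%N) && (j == 0%N))%:R.
Proof. by rewrite -[uS]mulr1 coef2_uM; case: i => [|i]; rewrite ?coef2_1. Qed.

Lemma coef2_v i j : coef2 vS i j = ((i == 0%N) && (j == 1%N))%:R.
Proof. by rewrite -[vS]mulr1 coef2_vM; case: j => [|j]; rewrite ?coef2_1 ?andbF. Qed.

Lemma coef2_sc c i j : coef2 (sc c) i j = c * ((i == 0%N) && (j == 0%N))%:R.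
Proof. by rewrite -[sc c]mulr1 coef2_scM coef2_1. Qed.

Lemma coef2_u10 : coef2 uS 1 0 = 1.
Proof. by rewrite coef2_u /= mulr1n. Qed.

Lemma scM a b : sc a * sc b = sc (a * b).
Proof. by apply: coef2P => i j; rewrite coef2_scM !coef2_sc mulrA. Qed.

Lemma sc1 : sc 1 = 1.
Proof. by apply: coef2P => i j; rewrite coef2_sc coef2_1 mul1r. Qed.

Lemma sc_inj : injective sc.
Proof. by move=> a b /(congr1 (fun f => coef2 f 0 0)); rewrite !coef2_sc !mulr1. Qed.

Lemma lreg_uS : GRing.lreg uS.
Proof.
move=> f g fg; apply: coef2P => i j.
by have := congr1 (fun h => coef2 h i.+1 j) fg; rewrite /= !coef2_uM.
Qed.

Lemma lreg_vS : GRing.lreg vS.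
Proof.
move=> f g fg; apply: coef2P => i j.
by have := congr1 (fun h => coef2 h i j.+1) fg; rewrite /= !coef2_vM.
Qed.

Lemma homogeneous1_u : homogeneous 1 uS.
Proof. by move=> i j ij; rewrite coef2_u; case: i ij => [|[|i]] //; case: j. Qed.

Lemma homogeneous1_v : homogeneous 1 vS.
Proof. by move=> i j ij; rewrite coef2_v; case: i ij => [|i] //; case: j => [|[|j]]. Qed.

Lemma homogeneous1_uM g : homogeneous 1 (uS * g) -> g = sc (coef2 g 0 0).
Proof.
move=> hom; apply: coef2P => i j; rewrite coef2_sc.
have := hom i.+1 j; rewrite coef2_uM.
by case: i => [|i]; case: j => [|j] h; rewrite /= ?mulr1 ?mulr0 //; apply: h; lia.
Qed.

Lemma homogeneous1_vM g : homogeneous 1 (vS * g) -> g = sc (coef2 g 0 0).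
Proof.
move=> hom; apply: coef2P => i j; rewrite coef2_sc.
have := hom i j.+1; rewrite coef2_vM.
by case: i => [|i]; case: j => [|j] h; rewrite /= ?mulr1 ?mulr0 //; apply: h; lia.
Qed.

End Coef2.

Lemma unitS1 : unitS 1.
Proof. by exists 1; rewrite mulr1. Qed.

Lemma unitS_mul a b : unitS a -> unitS b -> unitS (a * b).
Proof. by case=> a' aa' [b' bb']; exists (a' * b'); rewrite mulrACA aa' bb' mulr1. Qed.

Lemma unitS_sc c : c != 0 -> unitS (sc c).
Proof. by move=> c0; exists (sc c^-1); rewrite scM mulfV // sc1. Qed.

Lemma semilinearE (t f : S -> S) : Defs.semilinear t f -> forall m, f m = t m * f 1.
Proof. by case=> _ fM m; rewrite -fM mulr1. Qed.

Lemma semilinear_unit (t f : S -> S) :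
  Defs.semilinear t f -> bijective f -> unitS (f 1).
Proof. by move=> fS [g _ gK]; exists (t (g 1)); rewrite mulrC -(semilinearE fS). Qed.

Lemma semilinear_mulr (b : S) : Defs.semilinear id ( *%R^~ b).
Proof. by split=> [m m'|r m]; rewrite ?mulrDl ?mulrA. Qed.

Lemma bij_mulr (b : S) : unitS b -> bijective ( *%R^~ b).
Proof.
by case=> b' bb'; exists ( *%R^~ b') => m /=; rewrite -mulrA ?bb' ?[b' * b]mulrC ?bb' mulr1.
Qed.

Definition eq_cocycle {gT : finGroupType} (U1 : gT -> S -> S) (x : gT) : S :=
  U1 x^-1%g 1.

Definition twisted_str {gT : finGroupType} (act : gT -> S -> S) (w : gT -> S)
  (x : gT) (m : S) : S := act x^-1%g m * w x^-1%g.

Definition uv_char {gT : finGroupType} (act : gT -> S -> S) (x : gT) : C :=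
  coef2 (act x uS) 1 0.

Section GradedAction.
Variables (gT : finGroupType) (pi : gT -> bool) (act : gT -> S -> S).
Hypothesis Hact : graded_action pi act.
Implicit Types x y : gT.

Lemma actD x f g : act x (f + g) = act x f + act x g.
Proof. by case: Hact => _ _ aut _ _; case: (aut x). Qed.

Lemma actM x f g : act x (f * g) = act x f * act x g.
Proof. by case: Hact => _ _ aut _ _; case: (aut x). Qed.

Lemma act1 x : act x 1 = 1.
Proof. by case: Hact => _ _ aut _ _; case: (aut x). Qed.

Lemma act_sc x c : act x (sc c) = sc (pconj (pi x) c).
Proof.
case: Hact => _ _ aut _ _; case: (aut x) => _ _ _ a1 aZ.
by have := aZ c 1; rewrite !mulr1 a1 mulr1.
Qed.

Lemma act1g f : act 1%g f = f.
Proof. by case: Hact. Qed.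

Lemma actMg x y f : act (x * y)%g f = act x (act y f).
Proof. by case: Hact. Qed.

Lemma actK x : cancel (act x) (act x^-1%g).
Proof. by move=> f; rewrite -actMg mulVg act1g. Qed.

Lemma act_uv x : act x (uS * vS) = uS * vS.
Proof. by case: Hact. Qed.

Lemma act_homogeneous1 x f : homogeneous 1 f -> homogeneous 1 (act x f).
Proof. by case: Hact => _ _ _ deg _; apply: deg. Qed.

(* Degree preservation forces the constants; invariance of uv pairs them. *)
Lemma act_uv_scalar y p q : act y uS = uS * p -> act y vS = vS * q ->
  exists l : C, [/\ act y uS = sc l * uS, act y vS = sc l^-1 * vS & l != 0].
Proof.
move=> yu yv.
have /homogeneous1_uM hp : homogeneous 1 (uS * p).
  by rewrite -yu; apply/act_homogeneous1/homogeneous1_u.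
have /homogeneous1_vM hq : homogeneous 1 (vS * q).
  by rewrite -yv; apply/act_homogeneous1/homogeneous1_v.
set l := coef2 p 0 0 in hp; set mu := coef2 q 0 0 in hq.
have lmu : l * mu = 1.
  apply: sc_inj; rewrite sc1 -scM; apply: lreg_uS; apply: lreg_vS.
  have := act_uv y; rewrite actM yu yv hp hq => e.
  by transitivity (uS * sc l * (vS * sc mu)); [ring | rewrite e; ring].
have l0 : l != 0.
  by apply/eqP => l0; move: lmu; rewrite l0 mul0r => /esym/eqP; rewrite oner_eq0.
have mu_l : mu = l^-1 by rewrite -[mu]mul1r -(mulVf l0) -mulrA lmu mulr1.
exists l; split=> //; first by rewrite yu hp mulrC.
by rewrite yv hq mulrC mu_l.
Qed.

Lemma twisted_str_semilinear w x : Defs.semilinear (act x^-1%g) (twisted_str act w x).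
Proof. by split=> [m m'|r m]; rewrite /twisted_str ?actD ?mulrDl ?actM ?mulrA. Qed.

Lemma twisted_str_bij w x : unitS (w x^-1%g) -> bijective (twisted_str act w x).
Proof.
case=> w' ww'; exists (fun m => act x (m * w')) => m; rewrite /twisted_str.
  by rewrite -mulrA ww' mulr1 -{1}[x]invgK actK.
by rewrite actK -mulrA [w' * _]mulrC ww' mulr1.
Qed.

Lemma eq_cocycle_twisted w : eq_cocycle (twisted_str act w) =1 w.
Proof. by move=> x; rewrite /eq_cocycle /twisted_str invgK act1 mul1r. Qed.

Lemma cohomologous_refl (c : gT -> S) : cohomologous act c c.
Proof. by exists 1; split=> [|x]; [exact: unitS1 | rewrite act1 mulr1 mul1r]. Qed.

Lemma Z1_S1 : Z1_S act (fun=> 1).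
Proof. by split=> [x||x y]; rewrite ?act1 ?mulr1 //; apply: unitS1. Qed.

End GradedAction.

Section RealStructures.
Variables (gT : finGroupType) (pi : gT -> bool) (act : gT -> S -> S).
Hypothesis Hact : graded_action pi act.
Implicit Types x y : gT.
Variables U0 U1 : gT -> S -> S.
Hypothesis HU : RealEqStr act U0 U1.

Lemma RealEqStr_semilinear x :
  Defs.semilinear (act x^-1%g) (U0 x) /\ Defs.semilinear (act x^-1%g) (U1 x).
Proof. by case: HU. Qed.

Lemma RealEqStr_unit x : unitS (U0 x 1) /\ unitS (U1 x 1).
Proof.
have [s0 s1] := RealEqStr_semilinear x; case: HU => _ bij _ _; have [b0 b1] := bij x.
by split; [apply: semilinear_unit s0 b0 | apply: semilinear_unit s1 b1].
Qed.

Lemma RealEqStr_closed x :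
  uS * U0 x 1 = act x^-1%g uS * U1 x 1 /\ vS * U1 x 1 = act x^-1%g vS * U0 x 1.
Proof.
have [s0 s1] := RealEqStr_semilinear x; case: HU => _ _ cl _; have [c0 c1] := cl x.
by split; [rewrite c0 (semilinearE s1) | rewrite c1 (semilinearE s0)]; rewrite mulr1.
Qed.

Lemma RealEqStr_act_uv y :
  exists l : C, [/\ act y uS = sc l * uS, act y vS = sc l^-1 * vS & l != 0].
Proof.
have [[a' aa'] [b' bb']] := RealEqStr_unit y^-1%g.
have [eu ev] := RealEqStr_closed y^-1%g; rewrite invgK in eu ev.
have yu : act y uS = uS * (U0 y^-1%g 1 * b') by rewrite mulrA eu -mulrA bb' mulr1.
have yv : act y vS = vS * (U1 y^-1%g 1 * a') by rewrite mulrA ev -mulrA aa' mulr1.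
exact (act_uv_scalar Hact y yu yv).
Qed.

Lemma RealEqStr1 m : U0 1%g m = m /\ U1 1%g m = m.
Proof.
case: HU => _ bij _ comp; have [[g0 g0K _] [g1 g1K _]] := bij 1%g.
have [e0 e1] := comp 1%g 1%g m; rewrite mulg1 in e0 e1.
split; first by have := g0K (U0 1%g m); rewrite -e0 g0K.
by have := g1K (U1 1%g m); rewrite -e1 g1K.
Qed.

Lemma RealEqStr_Z1 : Z1_S act (eq_cocycle U1).
Proof.
split=> [x||x y]; rewrite /eq_cocycle.
- exact: (RealEqStr_unit _).2.
- by rewrite invg1 (RealEqStr1 1).2.
case: HU => _ _ _ comp; rewrite invMg (comp x^-1%g y^-1%g 1).2.
by rewrite (semilinearE (RealEqStr_semilinear _).2) invgK mulrC.
Qed.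

Lemma act_uv_char x :
  [/\ act x uS = sc (uv_char act x) * uS, act x vS = sc (uv_char act x)^-1 * vS
    & uv_char act x != 0].
Proof.
have [l [eu ev l0]] := RealEqStr_act_uv x.
suff -> : uv_char act x = l by [].
by rewrite /uv_char eu coef2_scM coef2_u10 mulr1.
Qed.

Lemma uv_char_Z1 : Z1_Cpi pi (uv_char act).
Proof.
split=> [x||x y].
- by have [] := act_uv_char x.
- by rewrite /uv_char (act1g Hact) coef2_u10.
rewrite {1}/uv_char (actMg Hact); have [-> _ _] := act_uv_char y.
rewrite (actM Hact) (act_sc Hact); have [-> _ _] := act_uv_char x.
by rewrite !coef2_scM coef2_u10 mulr1 mulrC.
Qed.

End RealStructures.

Section Classification.
Variables (gT : finGroupType) (pi : gT -> bool) (act : gT -> S -> S).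
Hypothesis Hact : graded_action pi act.
Implicit Types x y : gT.
Variable chi : gT -> C.
Hypothesis chi_Z1 : Z1_Cpi pi chi.
Hypothesis act_uvE :
  forall x, act x uS = sc (chi x) * uS /\ act x vS = sc (chi x)^-1 * vS.

Lemma twisted_RealEqStr (c : gT -> S) : Z1_S act c ->
  RealEqStr act (twisted_str act (fun x => sc (chi x) * c x)) (twisted_str act c).
Proof.
case: chi_Z1 => chi0 _ chiM [cu _ cM].
split=> [x|x|x|x1 x2 m].
- by split; exact (twisted_str_semilinear Hact _ _).
- split; apply (twisted_str_bij Hact); last exact: cu.
  exact: unitS_mul (unitS_sc _ (chi0 _)) (cu _).
- have [eu ev] := act_uvE x^-1%g.
  have chiV : sc (chi x^-1%g)^-1 * sc (chi x^-1%g) = 1 by rewrite scM mulVf // sc1.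
  split=> m; rewrite /twisted_str (actM Hact) ?eu ?ev; first ring.
  by rewrite -[LHS]mul1r -chiV; ring.
- rewrite /twisted_str invMg (actMg Hact) chiM cM -scM !(actM Hact) (act_sc Hact).
  by split; ring.
Qed.

End Classification.

Section Isomorphisms.
Variables (gT : finGroupType) (pi : gT -> bool) (act : gT -> S -> S).
Hypothesis Hact : graded_action pi act.
Implicit Types x y : gT.
Variables U0 U1 U0' U1' : gT -> S -> S.
Hypotheses (HU : RealEqStr act U0 U1) (HU' : RealEqStr act U0' U1').

Lemma EqStr_iso_cohomologous :
  EqStr_iso U0 U1 U0' U1' -> cohomologous act (eq_cocycle U1) (eq_cocycle U1').
Proof.
move=> [f0 [f1 [[_ sf1] [_ bf1] _ comm]]].
exists (f1 1); split=> [|x]; first exact: semilinear_unit sf1 bf1.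
have := (comm x^-1%g 1).2.
rewrite (semilinearE (RealEqStr_semilinear HU' _).2 (f1 1)) invgK (semilinearE sf1 (U1 _ 1)) => e.
by rewrite /eq_cocycle mulrC e mulrC.
Qed.

(* Transporting along multiplication by b, the u-component of the condition
   follows from the v-component by closedness and cancelling u. *)
Lemma cohomologous_EqStr_iso :
  cohomologous act (eq_cocycle U1) (eq_cocycle U1') -> EqStr_iso U0 U1 U0' U1'.
Proof.
case=> b [bU coh]; exists ( *%R^~ b), ( *%R^~ b).
split=> [||| x m]; first by split; apply: semilinear_mulr.
- by split; apply: bij_mulr.
- by split=> m; rewrite mulrA.
have e := coh x^-1%g; rewrite /eq_cocycle invgK in e.
have [s0 s1] := RealEqStr_semilinear HU x; have [s0' s1'] := RealEqStr_semilinear HU' x.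
have [cu _] := RealEqStr_closed HU x; have [cu' _] := RealEqStr_closed HU' x.
have e0 : U0' x 1 * act x^-1%g b = b * U0 x 1.
  by apply: lreg_uS; rewrite mulrA cu' -mulrA e [RHS]mulrCA cu mulrCA.
rewrite (semilinearE s0') (semilinearE s1') (semilinearE s0) (semilinearE s1).
by split; rewrite !(actM Hact) -!mulrA; congr (_ * _); rewrite mulrC ?e0 ?e mulrC.
Qed.

End Isomorphisms.

Unset Implicit Arguments.

Theorem mainTheorem8 (gT : finGroupType) (pi : gT -> bool) (act : gT -> S -> S)
  (pi_morph : forall x y : gT, pi (x * y)%g = pi x (+) pi y)
  (Hact : graded_action pi act) :
  ((exists U0 U1 : gT -> S -> S, RealEqStr act U0 U1) <->
   (exists chi : gT -> C, Z1_Cpi pi chi /\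
      forall x : gT, act x uS = sc (chi x) * uS /\ act x vS = sc (chi x)^-1 * vS))
  /\
  ((exists U0 U1 : gT -> S -> S, RealEqStr act U0 U1) ->
   exists Phi : (gT -> S -> S) -> (gT -> S -> S) -> gT -> S,
     [/\ forall U0 U1, RealEqStr act U0 U1 -> Z1_S act (Phi U0 U1),
         forall c, Z1_S act c ->
           exists U0 U1, RealEqStr act U0 U1 /\ cohomologous act (Phi U0 U1) c
       & forall U0 U1 U0' U1', RealEqStr act U0 U1 -> RealEqStr act U0' U1' ->
           (EqStr_iso U0 U1 U0' U1' <-> cohomologous act (Phi U0 U1) (Phi U0' U1'))]).
Proof.
have chi_of U0 U1 : RealEqStr act U0 U1 -> exists chi : gT -> C, Z1_Cpi pi chi /\
    forall x, act x uS = sc (chi x) * uS /\ act x vS = sc (chi x)^-1 * vS.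
  move=> HU; exists (uv_char act); split; first exact (uv_char_Z1 Hact HU).
  by move=> x; have [] := act_uv_char Hact HU x.
split.
  split=> [[U0 [U1 HU]] | [chi [chi_Z1 act_uvE]]]; first exact: chi_of HU.
  by do 2 eexists; exact (twisted_RealEqStr Hact chi_Z1 act_uvE (Z1_S1 Hact)).
move=> [U0 [U1 /chi_of [chi [chi_Z1 act_uvE]]]].
exists (fun _ U1 => eq_cocycle U1); split.
- by move=> V0 V1; apply: RealEqStr_Z1.
- move=> c cZ1; do 2 eexists; split.
    exact (twisted_RealEqStr Hact chi_Z1 act_uvE cZ1).
  by rewrite /= (funext (eq_cocycle_twisted Hact c)); exact (cohomologous_refl Hact c).
- move=> V0 V1 V0' V1' HV HV'; split.
    exact (EqStr_iso_cohomologous HV').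
  exact (cohomologous_EqStr_iso Hact HV HV').
Qed.
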